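(* The set $\mathtt{REV}$ of injective (equivalently, reversible) cellular automata on $\Sigma^\mathbb{Z}$ is a closed subset of $\mathtt{CA}$ equipped with the pointwise topology.
   Context: $\Sigma$ is a finite alphabet with $|\Sigma|\ge 2$, and $\Sigma^\mathbb{Z}$ carries the product (Cantor) topology. The shift $\sigma:\Sigma^\mathbb{Z}\to\Sigma^\mathbb{Z}$ is $\sigma(x)_i=x_{i+1}$. A cellular automaton (CA) is a continuous map $c:\Sigma^\mathbb{Z}\to\Sigma^\mathbb{Z}$ with $c\circ\sigma=\sigma\circ c$; $\mathtt{CA}$ is the set of all CA on $\Sigma^\mathbb{Z}$, and $\mathtt{REV}\subseteq\mathtt{CA}$ is the set of injective CA. The pointwise topology on $\mathtt{CA}$ is the topology generated by the subbase consisting of the sets $U_x(a)=\{c\in\mathtt{CA}\mid c(x)_0=a\}$ for $x\in\Sigma^\mathbb{Z}$, $a\in\Sigma$. *)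

From mathcomp Require Import all_boot.
From Stdlib Require Import ZArith List.
Set Implicit Arguments. Unset Strict Implicit. Unset Printing Implicit Defensive.

Definition config (Sigma : Type) := Z -> Sigma.

Definition shift (Sigma : Type) (x : config Sigma) : config Sigma :=
  fun i => x (i + 1)%Z.

(* Continuity for the product (Cantor) topology on Sigma^Z (Sigma discrete),
   written out: each output coordinate depends (locally) only on finitely many
   input coordinates, i.e. for every x and i there is a cylinder
   neighbourhood of x on which c(.)_i is constant. *)
Definition cantor_continuous (Sigma : Type) (c : config Sigma -> config Sigma) :=
  forall (x : config Sigma) (i : Z), exists n : nat,
    forall y : config Sigma,
      (forall j : Z, (Z.abs j <= Z.of_nat n)%Z -> y j = x j) -> c y i = c x i.

Definition is_CA (Sigma : Type) (c : config Sigma -> config Sigma) :=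
  cantor_continuous c /\ forall x : config Sigma, c (shift x) = shift (c x).

Record CA (Sigma : Type) := MkCA {
  ca_map :> config Sigma -> config Sigma;
  ca_isCA : is_CA ca_map }.

Definition REV (Sigma : Type) : CA Sigma -> Prop :=
  fun c => injective (ca_map c).

(* Topology generated by a subbase (U i)_{i : I} on a set X:
   O is open iff each point of O lies in a finite intersection of subbasic
   sets contained in O (the empty intersection being X). *)
Definition open_gen (X I : Type) (U : I -> X -> Prop) (O : X -> Prop) :=
  forall c : X, O c ->
    exists l : list I, (forall p, In p l -> U p c) /\
      (forall d : X, (forall p, In p l -> U p d) -> O d).

Definition closed_gen (X I : Type) (U : I -> X -> Prop) (S : X -> Prop) :=
  open_gen U (fun c => ~ S c).

(* Subbase of the pointwise topology on CA: U_x(a) = {c | c(x)_0 = a}. *)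
Definition pointwise_subbase (Sigma : Type) :
  (config Sigma * Sigma) -> CA Sigma -> Prop :=
  fun p c => ca_map c p.1 0%Z = p.2.

From mathcomp Require Import all_boot.
From Stdlib Require Import ZArith List Lia Classical FunctionalExtensionality.
From Stdlib Require Import IndefiniteDescription.

(* Let c be a non-injective CA.  By compactness of Sigma^Z (Koenig's lemma
   for a finite alphabet) c has a finite radius r: c(x)_i only depends on
   x restricted to [i - r, i + r].  Locality turns any collision c x = c y,
   x <> y, into a collision between two distinct p-periodic configurations:
   cut a block [a, b) containing a difference and bounded by identical
   (2r)-windows of the pair (x, y) -- found by the pigeonhole principle if
   x and y differ infinitely often, created by padding with a constant
   symbol otherwise -- and repeat it.  Such a periodic collision is
   witnessed by the 2p values c(x)_i, c(y)_i (0 <= i < p), i.e. by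
   finitely many subbasic conditions U_{shift^i z}(c(x)_i); every CA d in
   their intersection collides on the same periodic pair, so this open
   neighbourhood of c avoids REV. *)

Set Implicit Arguments. Unset Strict Implicit.

Section Shifts.
Variable Sigma : Type.
Local Open Scope Z_scope.

Definition shiftn (k : Z) (x : config Sigma) : config Sigma := fun j => x (j + k).

Lemma shiftn0 (x : config Sigma) : shiftn 0 x = x.
Proof. by apply: functional_extensionality => j; rewrite /shiftn Z.add_0_r. Qed.

Lemma shiftn_shiftn (a b : Z) (x : config Sigma) :
  shiftn a (shiftn b x) = shiftn (a + b) x.
Proof. by apply: functional_extensionality => j; rewrite /shiftn Z.add_assoc. Qed.

Lemma CA_shiftn (c : CA Sigma) (k : Z) (x : config Sigma) :
  c (shiftn k x) = shiftn k (c x).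
Proof.
have shift1 (z : config Sigma) : c (shiftn 1 z) = shiftn 1 (c z).
  by case: (ca_isCA c) => _; apply.
have shiftm1 (z : config Sigma) : c (shiftn (-1) z) = shiftn (-1) (c z).
  have {2}-> : z = shiftn 1 (shiftn (-1) z) by rewrite shiftn_shiftn shiftn0.
  by rewrite shift1 shiftn_shiftn shiftn0.
move: x; induction k as [|k IH|k IH] using Z.peano_ind => x; first by rewrite !shiftn0.
- by rewrite -Z.add_1_l -!shiftn_shiftn shift1 IH.
- by rewrite -Z.sub_1_r -Z.add_opp_l -!shiftn_shiftn shiftm1 IH.
Qed.

Definition periodic (p : Z) (x : config Sigma) := forall j, x j = x (j mod p).

Lemma periodic_eq (p : Z) (x : config Sigma) (i i' : Z) :
  periodic p x -> i mod p = i' mod p -> x i = x i'.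
Proof. by move=> px e; rewrite px e -px. Qed.

Lemma CA_periodic (c : CA Sigma) (p : Z) (x : config Sigma) :
  0 < p -> periodic p x -> periodic p (c x).
Proof.
move=> p_gt0 px i.
have x_inv : shiftn ((i / p) * p) x = x.
  apply: functional_extensionality => j.
  by rewrite /shiftn px (px j) Z.mod_add //; lia.
rewrite {1}(Z.div_mod i p); last lia.
by rewrite Z.add_comm (Z.mul_comm p) -{2}x_inv CA_shiftn.
Qed.

End Shifts.

Lemma infinite_pigeonhole (T : finType) (P : nat -> T -> Prop) :
  (forall N N' t, N <= N' -> P N' t -> P N t) -> (forall N, exists t, P N t) ->
  exists t, forall N, P N t.
Proof.
move=> P_down P_ex; apply: NNPP => no_colour.
have escape t : exists N, ~ P N t.
  apply: NNPP => all_t; apply: no_colour; exists t => N.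
  by apply: NNPP => nP; apply: all_t; exists N.
pose Nt t := proj1_sig (constructive_indefinite_description _ (escape t)).
have [t Pt] := P_ex (\max_(t : T) Nt t).
apply: (proj2_sig (constructive_indefinite_description _ (escape t))).
by apply: P_down Pt; apply: (leq_bigmax t).
Qed.

Lemma diagonal_limit (Sigma : Type) (s : nat -> config Sigma) :
  (forall n j, (Z.abs j < Z.of_nat n)%Z -> s n.+1 j = s n j) ->
  forall n j, (Z.abs j < Z.of_nat n)%Z -> s (Z.abs_nat j).+1 j = s n j.
Proof.
move=> s_frozen.
have stable m n j : n <= m -> (Z.abs j < Z.of_nat n)%Z -> s m j = s n j.
  elim: m => [|m IH]; first by rewrite leqn0 => /eqP ->.
  rewrite leq_eqVlt ltnS => /orP [/eqP -> // | /leP le_nm] jn.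
  by rewrite s_frozen ?IH //; [apply/leP | lia].
move=> n j jn.
have le_jn : (Z.abs_nat j).+1 <= n by apply/leP; lia.
by rewrite (stable n _ j le_jn) //; lia.
Qed.

(* The pattern z is m-bad for f when pairs of configurations that are
   arbitrarily close, yet separated by f at cell 0, exist among the
   extensions of z restricted to |j| < m.  If f is not uniformly continuous
   at 0, every configuration is 0-bad. *)
Definition bad_pattern (Sigma : Type) (f : config Sigma -> config Sigma)
    (m : nat) (z : config Sigma) :=
  forall N : nat, exists x y : config Sigma,
    [/\ forall j, (Z.abs j <= Z.of_nat N)%Z -> x j = y j, f x 0%Z <> f y 0%Z
      & forall j, (Z.abs j < Z.of_nat m)%Z -> x j = z j].

(* Koenig's step: an m-bad pattern extends, by fixing the two cells -m and m,
   to an (m+1)-bad one; the pigeonhole principle chooses their values. *)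
Lemma bad_pattern_extend (Sigma : finType) (f : config Sigma -> config Sigma)
    (m : nat) (z : config Sigma) : bad_pattern f m z ->
  exists z', bad_pattern f m.+1 z' /\
    forall j, (Z.abs j < Z.of_nat m)%Z -> z' j = z j.
Proof.
move=> z_bad.
have [|N|t often_t] := @infinite_pigeonhole _ (fun N (t : Sigma * Sigma) =>
  exists x y : config Sigma,
    [/\ forall j, (Z.abs j <= Z.of_nat N)%Z -> x j = y j, f x 0%Z <> f y 0%Z,
        forall j, (Z.abs j < Z.of_nat m)%Z -> x j = z j
      & (x (- Z.of_nat m)%Z, x (Z.of_nat m)) = t]).
- move=> N N' t /leP le_N [x [y [xy fxy xz xt]]]; exists x, y.
  by split=> // j jN; apply: xy; lia.
- have [x [y [xy fxy xz]]] := z_bad N.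
  by exists (x (- Z.of_nat m)%Z, x (Z.of_nat m)), x, y.
exists (fun j => if Z.eqb j (- Z.of_nat m) then t.1
                 else if Z.eqb j (Z.of_nat m) then t.2 else z j).
split=> [N|j jm]; last first.
  by case: Z.eqb_spec => [?|_]; [lia | case: Z.eqb_spec => [?|//]; lia].
have [x [y [xy fxy xz <-]]] := often_t N; exists x, y; split=> // j jm.
case: Z.eqb_spec => [->//|ne_l]; case: Z.eqb_spec => [->//|ne_r].
by apply: xz; lia.
Qed.

(* Compactness of Sigma^Z for a finite alphabet: a continuous map has a
   uniform modulus of continuity at the cell 0.  Otherwise iterating
   bad_pattern_extend yields coherent bad patterns whose limit is a point
   of discontinuity. *)
Lemma uniformly_continuous (Sigma : finType) (f : config Sigma -> config Sigma) :
  cantor_continuous f ->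
  exists n : nat, forall x y : config Sigma,
    (forall j, (Z.abs j <= Z.of_nat n)%Z -> x j = y j) -> f x 0%Z = f y 0%Z.
Proof.
move=> f_cont; apply: NNPP => not_uniform.
have bad0 z : bad_pattern f 0 z.
  move=> N; apply: NNPP => none; apply: not_uniform; exists N => x y xy.
  by apply: NNPP => fxy; apply: none; exists x, y; split=> // j; lia.
have [x0 _] : exists x0 : config Sigma, True.
  by apply: NNPP => empty; apply: not_uniform; exists 0 => x; case: empty; exists x.
have next m z : exists z', bad_pattern f m z ->
    bad_pattern f m.+1 z' /\ forall j, (Z.abs j < Z.of_nat m)%Z -> z' j = z j.
  case: (classic (bad_pattern f m z)) => [/bad_pattern_extend [z' ?]|not_bad].
    by exists z'.
  by exists z.
pose nextf m z := proj1_sig (constructive_indefinite_description _ (next m z)).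
have nextf_spec m z := proj2_sig (constructive_indefinite_description _ (next m z)).
pose s := fix s n := if n is m.+1 then nextf m (s m) else x0.
have s_bad n : bad_pattern f n (s n).
  by elim: n => [|n IH]; [exact: bad0 | have [] := nextf_spec n (s n) IH].
have s_frozen n j : (Z.abs j < Z.of_nat n)%Z -> s n.+1 j = s n j.
  by have [_] := nextf_spec n (s n) (s_bad n); apply.
pose z j := s (Z.abs_nat j).+1 j.
have [n cont_z] := f_cont z 0%Z.
have [x [y [xy fxy xs]]] := s_bad n.+1 n.
have xz j : (Z.abs j <= Z.of_nat n)%Z -> x j = z j.
  by move=> jn; rewrite /z (diagonal_limit s_frozen (n := n.+1)) ?xs //; lia.
apply: fxy; rewrite (cont_z x xz) (cont_z y) // => j jn.
by rewrite -xy ?xz.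
Qed.

Local Open Scope Z_scope.

(* Finite radius (the local-rule half of Curtis-Hedlund-Lyndon): the value
   of a CA at cell i only depends on the window [i - r, i + r]. *)
Lemma CA_local (Sigma : finType) (c : CA Sigma) : exists r, 0 <= r /\
  forall x y i, (forall j, i - r <= j <= i + r -> x j = y j) -> c x i = c y i.
Proof.
have [n c_unif] := uniformly_continuous (proj1 (ca_isCA c)).
exists (Z.of_nat n); split=> [|x y i xy]; first lia.
have at_i (z : config Sigma) : c z i = c (shiftn i z) 0 by rewrite CA_shiftn.
by rewrite !at_i; apply: c_unif => j jn; apply: xy; lia.
Qed.

(* A collision of c between two distinct p-periodic configurations; it is
   witnessed by finitely many values of c, which makes it robust. *)
Definition periodic_collision (Sigma : Type) (c : CA Sigma) :=
  exists p (x y : config Sigma), [/\ 0 < p, periodic p x, periodic p y, x <> y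
    & forall i, 0 <= i < p -> c x i = c y i].

Section PeriodicCollision.
Variables (Sigma : finType) (c : CA Sigma) (r : Z).
Hypothesis r_ge0 : 0 <= r.
Hypothesis c_local :
  forall x y i, (forall j, i - r <= j <= i + r -> x j = y j) -> c x i = c y i.

Definition same_window (z : config Sigma) (a b : Z) :=
  forall t, 0 <= t < 2 * r -> z (a - r + t) = z (b - r + t).

Lemma same_window_sym z a b : same_window z a b -> same_window z b a.
Proof. by move=> zab t t_lt; rewrite zab. Qed.

Definition wrap (a p : Z) (z : config Sigma) : config Sigma :=
  fun j => z (a + (j - a) mod p).

Lemma wrap_periodic a p z : periodic p (wrap a p z).
Proof. by move=> j; rewrite /wrap Zminus_mod_idemp_l. Qed.

Lemma wrap_window a b z j : a + r <= b -> same_window z a b ->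
  a - r <= j < b + r -> wrap a (b - a) z j = z j.
Proof.
move=> ab zab jab; rewrite /wrap.
have mod_is k : 0 <= j - a + k * (b - a) < b - a ->
    (j - a) mod (b - a) = j - a + k * (b - a).
  move=> bnd; symmetry; apply: (Z.mod_unique_pos _ _ (- k)) => //; ring.
case: (Z_lt_le_dec j a) => [lt_ja|le_aj].
  rewrite (mod_is 1); last lia.
  have -> : a + (j - a + 1 * (b - a)) = b - r + (j - a + r) by ring.
  by rewrite -zab; [f_equal; ring | lia].
case: (Z_lt_le_dec j b) => [lt_jb|le_bj].
  by rewrite (mod_is 0); [f_equal|]; lia.
rewrite (mod_is (-1)); last lia.
have -> : a + (j - a + -1 * (b - a)) = a - r + (j - b + r) by ring.
by rewrite zab; [f_equal; ring | lia].
Qed.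

Lemma wrap_collision x y a b : a + r <= b -> same_window x a b -> same_window y a b ->
  (exists j, a <= j < b /\ x j <> y j) -> c x = c y -> periodic_collision c.
Proof.
move=> ab xab yab [j0 [j0ab xy_j0]] cxy.
have p_gt0 : 0 < b - a by lia.
exists (b - a), (wrap a (b - a) x), (wrap a (b - a) y).
split=> [//|||wxy|i _]; try exact: wrap_periodic.
  by apply: xy_j0; rewrite -(wrap_window ab xab) ?wxy ?(wrap_window ab yab) //; lia.
(* move i into the block [a, b), where the wrapped configurations are x, y *)
pose i' := a + (i - a) mod (b - a).
have [lo hi] := Z.mod_pos_bound (i - a) (b - a) p_gt0.
have same_class : i mod (b - a) = i' mod (b - a).
  by rewrite /i' Z.add_mod_idemp_r; [f_equal; ring | lia].
have at_block z : same_window z a b -> c (wrap a (b - a) z) i = c z i'.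
  move=> zab; have wz_per := CA_periodic c p_gt0 (wrap_periodic a (b - a) z).
  rewrite (periodic_eq wz_per same_class).
  by apply: c_local => j j_near; apply: wrap_window => //; rewrite /i' in j_near; lia.
by rewrite !at_block // cxy.
Qed.

(* Collision of configurations differing on finitely many cells: replace
   both far outside the difference zone by a constant, which keeps them
   colliding and creates matching windows on both sides. *)
Lemma collision_bounded x y M : (exists j, Z.abs j <= M /\ x j <> y j) ->
  (forall j, M < Z.abs j -> x j = y j) -> c x = c y -> periodic_collision c.
Proof.
move=> [j0 [j0M xy_j0]] xy_out cxy.
pose pad (z : config Sigma) j := if Z.abs j <=? M + 2 * r then z j else x 0.
have pad_in z j : Z.abs j <= M + 2 * r -> pad z j = z j.
  by rewrite /pad; case: Z.leb_spec => //; lia.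
have pad_out z j : M + 2 * r < Z.abs j -> pad z j = x 0.
  by rewrite /pad; case: Z.leb_spec => //; lia.
have c_pad : c (pad x) = c (pad y).
  apply: functional_extensionality => i.
  case: (Z_le_gt_dec (Z.abs i) (M + r)) => [i_in|i_out].
    have near_i z : c (pad z) i = c z i by apply: c_local => j j_near; apply: pad_in; lia.
    by rewrite !near_i cxy.
  apply: c_local => j j_near.
  case: (Z_le_gt_dec (Z.abs j) (M + 2 * r)) => [j_in|j_out].
    by rewrite !pad_in ?xy_out //; lia.
  by rewrite !pad_out //; lia.
have far_window z : same_window (pad z) (- (M + 3 * r + 1)) (M + 3 * r + 1).
  by move=> t t_lt; rewrite !pad_out //; lia.
apply: (wrap_collision _ (far_window x) (far_window y)) c_pad; first lia.
by exists j0; split; [lia | rewrite !pad_in //; lia].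
Qed.

(* Collision of configurations differing on infinitely many cells: two far
   apart differing cells with the same surrounding windows exist by the
   pigeonhole principle. *)
Lemma collision_unbounded x y :
  (forall N : nat, exists j, Z.of_nat N <= Z.abs j /\ x j <> y j) -> c x = c y ->
  periodic_collision c.
Proof.
move=> xy_often cxy.
pose window j : {ffun 'I_(Z.to_nat (2 * r)) -> Sigma * Sigma} :=
  [ffun t : 'I__ => (x (j - r + Z.of_nat t), y (j - r + Z.of_nat t))].
have [|N|w w_often] := @infinite_pigeonhole _
  (fun N w => exists j, [/\ Z.of_nat N <= Z.abs j, x j <> y j & window j = w]).
- by move=> N N' w /leP le_N [j [jN xy_j wj]]; exists j; split=> //; lia.
- by have [j [jN xy_j]] := xy_often N; exists (window j), j.
have [j1 [_ xy_j1 w1]] := w_often 0%N.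
have [j2 [far xy_j2 w2]] := w_often (Z.to_nat (Z.abs j1 + 2 * r + 1)).
have windows : same_window x j1 j2 /\ same_window y j1 j2.
  suff same t : 0 <= t < 2 * r ->
      (x (j1 - r + t), y (j1 - r + t)) = (x (j2 - r + t), y (j2 - r + t)).
    by split=> t t_lt; case: (same t t_lt).
  move=> t_lt; have t_ord : (Z.to_nat t < Z.to_nat (2 * r))%coq_nat by lia.
  have /ffunP/(_ (Ordinal (introT ltP t_ord))) := etrans w1 (esym w2).
  by rewrite !ffunE /= Z2Nat.id //; lia.
have [xw yw] := windows.
have [lt_12|lt_21] : j1 < j2 \/ j2 < j1 by lia.
  by apply: (wrap_collision _ xw yw) cxy; [lia | exists j1; split=> //; lia].
apply: (wrap_collision _ (same_window_sym xw) (same_window_sym yw)) cxy; first lia.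
by exists j2; split=> //; lia.
Qed.

Lemma periodic_collision_of_collision x y : x <> y -> c x = c y ->
  periodic_collision c.
Proof.
move=> xy cxy.
have [j0 xy_j0] : exists j, x j <> y j.
  apply: NNPP => none; apply: xy; apply: functional_extensionality => j.
  by apply: NNPP => xy_j; apply: none; exists j.
case: (classic (exists M, forall j, M < Z.abs j -> x j = y j)) => [[M xy_out]|unbounded].
  apply: (collision_bounded (M := Z.max M (Z.abs j0))) cxy.
    by exists j0; split=> //; lia.
  by move=> j j_out; apply: xy_out; lia.
apply: collision_unbounded cxy => N.
apply: NNPP => none; apply: unbounded; exists (Z.of_nat N) => j j_out.
by apply: NNPP => xy_j; apply: none; exists j; split=> //; lia.
Qed.

End PeriodicCollision.

(* A periodic collision of c is witnessed by the finitely many subbasic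
   conditions d (shiftn i z)_0 = c(x)_i, z in {x, y}, 0 <= i < p; every CA d
   satisfying them collides on the same pair, hence is not injective. *)
Lemma periodic_collision_nbhd (Sigma : Type) (c : CA Sigma) : periodic_collision c ->
  exists l, (forall q, In q l -> pointwise_subbase q c) /\
    forall d, (forall q, In q l -> pointwise_subbase q d) -> ~ REV d.
Proof.
move=> [p [x [y [p_gt0 px py xy cxy]]]].
pose cells := map Z.of_nat (List.seq 0 (Z.to_nat p)).
have cells_spec i : In i cells <-> 0 <= i < p.
  rewrite in_map_iff; split=> [[n [<- /in_seq]]|i_in]; first lia.
  by exists (Z.to_nat i); rewrite in_seq; split; lia.
pose conds (z : config Sigma) := map (fun i => (shiftn i z, c x i)) cells.
have at_shift (d : CA Sigma) z i : d (shiftn i z) 0 = d z i by rewrite CA_shiftn.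
exists (conds x ++ conds y); split.
  move=> q /in_app_iff [] /in_map_iff [i [<- /cells_spec i_in]];
    by rewrite /pointwise_subbase /= at_shift ?cxy.
move=> d d_sat d_inj; apply: xy; apply: d_inj; apply: functional_extensionality => i.
have i_in : In (i mod p) cells by apply/cells_spec; apply: Z.mod_pos_bound.
have value_at z : In (shiftn (i mod p) z, c x (i mod p)) (conds x ++ conds y) ->
    d z (i mod p) = c x (i mod p).
  by move=> z_in; rewrite -at_shift; exact: (d_sat _ z_in).
rewrite (CA_periodic d p_gt0 px i) (CA_periodic d p_gt0 py i) !value_at //.
  by apply: in_or_app; right; apply: (in_map (fun i => (shiftn i y, c x i))).
by apply: in_or_app; left; apply: (in_map (fun i => (shiftn i x, c x i))).
Qed.

Close Scope Z_scope.

Theorem proposition3p2 (Sigma : finType) (hSigma : 1 < #|Sigma|) :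
  closed_gen (@pointwise_subbase Sigma) (@REV Sigma).
Proof.
move=> c not_rev; apply: periodic_collision_nbhd.
have [x [y [xy cxy]]] : exists x y, x <> y /\ c x = c y.
  apply: NNPP => none; apply: not_rev => x y cxy.
  by apply: NNPP => xy; apply: none; exists x, y.
have [r [r_ge0 c_local]] := CA_local c.
exact: periodic_collision_of_collision r_ge0 c_local x y xy cxy.
Qed.
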